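(* Let $(B,\mathfrak m)$ be a local Prüfer ring such that $\mathfrak m = Z(B)$ and $\mathfrak m^2 \neq 0$ (for instance $B = \mathbb Z/8\mathbb Z$), and let $I := \mathfrak m$. Let $A := B \bowtie I$, let $f : A \to B$ be a surjective ring homomorphism, and let $J := I$. Then $A\bowtie^f J$ is a Prüfer ring and $A \bowtie^f J$ is not a Gaussian ring.
   Context: All rings are commutative with identity. For an ideal $I$ of a ring $B$, $B \bowtie I := \{(b, b+i) : b \in B, i \in I\}\subseteq B\times B$ (amalgamated duplication). For a ring homomorphism $f:A\to B$ and an ideal $J$ of $B$, $A \bowtie^f J := \{(a, f(a)+j) : a \in A, j \in J\}$, a subring of $A\times B$. $Z(B)$ is the set of zero-divisors of $B$. An ideal is regular if it contains a regular element. A ring $R$ is a Prüfer ring if every finitely generated regular ideal of $R$ is invertible. A ring $R$ is Gaussian if $c(gh)=c(g)c(h)$ for all $g,h\in R[x]$, where $c(p)$ is the ideal generated by the coefficients of $p$. *)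

From HB Require Import structures.
From mathcomp Require Import all_boot all_order all_algebra.
Set Implicit Arguments. Unset Strict Implicit. Unset Printing Implicit Defensive.
Import GRing.Theory.
Local Open Scope ring_scope.

Section Ideals.
Variable R : comNzRingType.

Definition is_ideal (I : R -> Prop) : Prop :=
  [/\ I 0, (forall x y, I x -> I y -> I (x + y)) & (forall r x, I x -> I (r * x))].

Definition proper_ideal (I : R -> Prop) : Prop := is_ideal I /\ ~ I 1.

Definition maximal_ideal (M : R -> Prop) : Prop :=
  proper_ideal M /\
  forall N : R -> Prop, is_ideal N -> (forall x, M x -> N x) ->
    (forall x, N x <-> M x) \/ (forall x, N x).

Definition local_ring (m : R -> Prop) : Prop :=
  maximal_ideal m /\
  forall M : R -> Prop, maximal_ideal M -> forall x, M x <-> m x.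

Definition zero_divisor (x : R) : Prop := exists y : R, y != 0 /\ x * y = 0.

Definition regular (x : R) : Prop := forall y : R, x * y = 0 -> y = 0.

Definition regular_ideal (I : R -> Prop) : Prop := exists x, I x /\ regular x.

Definition ideal_gen (s : seq R) : R -> Prop :=
  fun x => exists r : 'I_(size s) -> R, x = \sum_(i < size s) r i * s`_i.

Definition finitely_generated (I : R -> Prop) : Prop :=
  exists s : seq R, forall x, I x <-> ideal_gen s x.

Definition ideal_mul (I J : R -> Prop) : R -> Prop :=
  fun x => exists ps : seq (R * R),
    (forall p, p \in ps -> I p.1 /\ J p.2) /\ x = \sum_(p <- ps) p.1 * p.2.

(* Invertibility of an ideal I in the total ring of fractions Q(R)
   (I * (R :_Q I) = R), written out with fractions over a common regular
   denominator s: there are i_k in I and b_k in R such that each b_k/s lies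
   in (R :_Q I) (i.e. b_k * I is contained in sR) and sum_k i_k (b_k/s) = 1
   (i.e. sum_k i_k b_k = s). *)
Definition invertible_ideal (I : R -> Prop) : Prop :=
  exists s : R, regular s /\
  exists ps : seq (R * R),
    (forall p, p \in ps -> I p.1 /\
        forall i, I i -> exists r : R, p.2 * i = s * r) /\
    \sum_(p <- ps) p.1 * p.2 = s.

Definition prufer_ring : Prop :=
  forall I : R -> Prop, is_ideal I -> finitely_generated I -> regular_ideal I ->
    invertible_ideal I.

Definition content (p : {poly R}) : R -> Prop := ideal_gen (polyseq p).

Definition gaussian_ring : Prop :=
  forall g h : {poly R}, forall x,
    content (g * h) x <-> ideal_mul (content g) (content h) x.

End Ideals.

Record ideal (R : comNzRingType) := Ideal {
  ideal_pred : {pred R};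
  ideal_predP : is_ideal (fun x => x \in ideal_pred) }.

(* Amalgamation  A ⋈^f J = {(a, f a + j) : a in A, j in J} ⊆ A × B.    *)
Section Amalgamation.
Variables (A B : comNzRingType) (f : {rmorphism A -> B}) (J : ideal B).

Definition amalg_pred : {pred A * B} :=
  [pred x : A * B | x.2 - f x.1 \in ideal_pred J].

Lemma amalg_pred_subring_closed : subring_closed amalg_pred.
Proof.
have [J0 JD JM] := ideal_predP J.
have JN : forall x, x \in ideal_pred J -> - x \in ideal_pred J.
  by move=> x Jx; rewrite -mulN1r; apply: JM.
split.
- by rewrite inE /= rmorph1 subrr.
- move=> [a1 b1] [a2 b2]; rewrite !inE /= => H1 H2.
  rewrite rmorphB.
  have -> : b1 - b2 - (f a1 - f a2) = (b1 - f a1) + - (b2 - f a2).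
    by rewrite !opprB addrA [RHS]addrA [RHS]addrAC -!addrA [f a2 - _]addrC; congr (_ + _); exact: addrCA.
  by apply: JD => //; apply: JN.
- move=> [a1 b1] [a2 b2]; rewrite !inE /= => H1 H2.
  rewrite rmorphM.
  have -> : b1 * b2 - f a1 * f a2 = b1 * (b2 - f a2) + f a2 * (b1 - f a1).
    by rewrite !mulrBr [f a2 * b1]mulrC [f a2 * f a1]mulrC addrA subrK.
  by apply: JD; apply: JM.
Qed.

HB.instance Definition _ :=
  GRing.isSubringClosed.Build (A * B)%type amalg_pred amalg_pred_subring_closed.

Record amalg := Amalg { amalg_val : A * B; _ : amalg_val \in amalg_pred }.

HB.instance Definition _ := [isSub for amalg_val].
HB.instance Definition _ := [Choice of amalg by <:].
HB.instance Definition _ := [SubChoice_isSubComNzRing of amalg by <:].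

End Amalgamation.

(* Amalgamated duplication B ⋈ I = {(b, b + i)} = B ⋈^{id_B} I. *)
Definition dup (B : comNzRingType) (I : ideal B) : comNzRingType :=
  amalg (idfun : {rmorphism B -> B}) I.

From HB Require Import structures.
From mathcomp Require Import all_boot all_order all_algebra.
From mathcomp Require Import boolp.
From mathcomp Require classical_sets.
From mathcomp Require Import ring.
Set Implicit Arguments.
Unset Strict Implicit.
Unset Printing Implicit Defensive.

Import GRing.Theory.
Local Open Scope ring_scope.

(* Every regular element of [A ⋈^f m] is a unit.  If [(a, f a + j)] is regular, its second
   coordinate avoids [m = Z(B)], since an annihilator [t ∈ m] would make [(0, t)] a zero divisor;
   hence [f a ∉ m], hence [a] is a unit of the local ring [A = B ⋈ m], because the surjection [f]
   sends the maximal ideal of [A] into [m].  So [A ⋈^f m] is its own total ring of fractions and is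
   Prüfer for trivial reasons.
   For non-Gaussianity take [x, y ∈ m] with [x y ≠ 0] and [a = (0, x)], [b = (y, 0)],
   [c = (x, 0)], [d = (0, y)] in [A].  Then [a c = b d = 0], so Gauss' property for
   [(a + b X) (c + d X) = (a d + b c) X], transported along [a ↦ (a, f a)], would make [a d] a
   multiple of [a d + b c] in [A], which the local ring [B] forbids. *)

Section IdealClosure.
Variables (R : comNzRingType) (I : {pred R}) (idealI : is_ideal (fun x => x \in I)).

Lemma ideal0 : 0 \in I. Proof. by case: idealI. Qed.

Lemma idealD x y : x \in I -> y \in I -> x + y \in I.
Proof. by case: idealI => _ + _; apply. Qed.

Lemma idealMl r x : x \in I -> r * x \in I.
Proof. by case: idealI => _ _; apply. Qed.

Lemma idealMr r x : x \in I -> x * r \in I.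
Proof. by rewrite mulrC; apply: idealMl. Qed.

Lemma idealN x : x \in I -> - x \in I.
Proof. by rewrite -mulN1r; apply: idealMl. Qed.

Lemma idealB x y : x \in I -> y \in I -> x - y \in I.
Proof. by move=> Ix Iy; apply: idealD Ix (idealN Iy). Qed.

Lemma idealBC x y : x - y \in I -> y - x \in I.
Proof. by move=> /idealN; rewrite opprB. Qed.

Lemma ideal_notinB x y : x \notin I -> y - x \in I -> y \notin I.
Proof.
move=> /negP Ix Iyx; apply/negP => Iy; apply: Ix.
by rewrite -[x](subKr y); apply: idealB.
Qed.

End IdealClosure.

Lemma ideal_mul_neq0 (R : comNzRingType) (I J : R -> Prop) :
  ~ (forall x, ideal_mul I J x -> x = 0) -> exists a b, [/\ I a, J b & a * b != 0].
Proof.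
move=> IJneq0; apply: contrapT => allzero; apply: IJneq0 => x [ps [psIJ ->]].
rewrite big1_seq // => p /andP[_ pps]; apply/eqP; apply: contraT => pneq0.
by case: allzero; exists p.1, p.2; have [] := psIJ p pps.
Qed.

Section MaximalIdeal.
Import classical_sets.
Local Open Scope classical_set_scope.

Lemma nonunit_maximal_ideal (R : comNzRingType) (x : R) :
  ~ (exists y, x * y = 1) -> exists M : R -> Prop, maximal_ideal M /\ M x.
Proof.
move=> xnonunit.
(* [set0] is admitted so that the union of the empty chain stays in [P] *)
pose P : set (set R) := fun S => S = set0 \/ [/\ is_ideal S, ~ S 1 & S x].
have Px : P (fun y => exists r, y = r * x).
  right; split; [split| |by exists 1; rewrite mul1r].
  - by exists 0; rewrite mul0r.
  - by move=> _ _ [r ->] [s ->]; exists (r + s); rewrite mulrDl.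
  - by move=> r _ [s ->]; exists (r * s); rewrite mulrA.
  - by move=> [r /esym r1]; apply: xnonunit; exists r; rewrite mulrC.
have [M [PM Mmax]] : exists M, P M /\ forall N, M `<` N -> ~ P N.
  apply: Zorn_bigcup => F FP Ftot.
  have [[y0 [X0 FX0 X0y0]]|F0] := pselect (exists y, (\bigcup_(X in F) X) y); last first.
    by left; apply/seteqP; split=> // y Uy; apply: F0; exists y.
  have FI X y : F X -> X y -> [/\ is_ideal X, ~ X 1 & X x].
    by move=> FX Xy; case: (FP X FX) => // Xempty; rewrite Xempty in Xy.
  right; split; [split| |].
  - by exists X0 => //; have [[]] := FI _ _ FX0 X0y0.
  - move=> a b [X FX Xa] [Y FY Yb].
    have [[_ XD _] _ _] := FI _ _ FX Xa; have [[_ YD _] _ _] := FI _ _ FY Yb.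
    have [XY|YX] := Ftot X Y FX FY.
    + by exists Y => //; apply: YD => //; apply: XY.
    + by exists X => //; apply: XD => //; apply: YX.
  - by move=> r a [X FX Xa]; exists X => //; have [[_ _ XM] _ _] := FI _ _ FX Xa; apply: XM.
  - by move=> [X FX X1]; have [] := FI _ _ FX X1.
  - by exists X0 => //; have [] := FI _ _ FX0 X0y0.
case: PM => [M0|[idealM M1 Mx]].
  exfalso; apply: (Mmax _ _ Px); rewrite M0; split; first by [].
  by move/(_ x); apply; exists 1; rewrite mul1r.
exists M; split=> //; split=> // N Nideal MN.
have [N1|N1] := pselect (N 1).
  by right=> y; have [_ _ NM] := Nideal; rewrite -[y]mulr1; apply: NM.
have [NM|NM] := pselect (forall y, N y -> M y); first by left=> y; split; [apply: NM|apply: MN].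
by exfalso; apply: (Mmax N); [split | right; split=> //; apply: MN].
Qed.

End MaximalIdeal.

Section LocalRing.
Variables (R : comNzRingType) (m : {pred R}).
Hypothesis local_m : local_ring (fun x => x \in m).

Lemma local_ideal : is_ideal (fun x => x \in m).
Proof. by case: local_m => [[[]]]. Qed.

Lemma local_one_notin : 1 \notin m.
Proof. by apply/negP; case: local_m => [[[_]]]. Qed.

Lemma local_unit x : x \notin m -> exists y, x * y = 1.
Proof.
move=> /negP xm; apply: contrapT => xnonunit.
have [M [maxM Mx]] := nonunit_maximal_ideal xnonunit.
by case: local_m => _ /(_ M maxM x) [/(_ Mx)].
Qed.

Lemma local_nonunit x : ~ (exists y, x * y = 1) -> x \in m.
Proof. by move=> xnonunit; apply: contraT => /local_unit. Qed.

(* If [c1] is not a unit then [c2] lies in [m] and [1 - c2] is a unit; either unit kills [w]. *)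
Lemma local_eq0_of_mul_congr c1 c2 w :
  c2 - c1 \in m -> c1 * w = 0 -> c2 * w = w -> w = 0.
Proof.
move=> c21m c1w c2w.
have [c1m|c1m] := boolP (c1 \in m).
  have c2m : c2 \in m by rewrite -(subrK c1 c2); exact: (idealD local_ideal c21m c1m).
  have /local_unit [u u1] : 1 - c2 \notin m.
    apply: (ideal_notinB local_ideal local_one_notin).
    by rewrite addrAC subrr sub0r; exact: (idealN local_ideal c2m).
  rewrite -[w]mul1r -u1 mulrAC mulrBl mul1r c2w.
  by rewrite subrr mul0r.
have [u u1] := local_unit c1m.
by rewrite -[w]mul1r -u1 mulrAC c1w mul0r.
Qed.

End LocalRing.

Lemma prufer_of_regular_unit (R : comNzRingType) :
  (forall z : R, regular z -> exists z', z * z' = 1) -> prufer_ring R.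
Proof.
move=> regular_unit I idealI _ [z [Iz /regular_unit [z' zz']]].
have I1 : I 1 by case: idealI => _ _ IM; rewrite -zz' mulrC; apply: IM.
exists 1; split; first by move=> y; rewrite mul1r.
exists [:: (1, 1)]; split; last by rewrite big_seq1 mulr1.
by move=> p; rewrite inE => /eqP -> /=; split=> // i _; exists i; rewrite !mul1r.
Qed.

Lemma content_coef (R : comNzRingType) (p : {poly R}) i : content p p`_i.
Proof.
have [ltip|leip] := ltnP i (size p); last first.
  by exists (fun _ => 0); rewrite big1 ?nth_default // => j _; rewrite mul0r.
exists (fun j : 'I_(size p) => (j == Ordinal ltip)%:R).
rewrite (bigD1 (Ordinal ltip)) //= eqxx mul1r big1 ?addr0 // => j /negPf ->.
by rewrite mul0r.
Qed.

(* [(a + b X) (c + d X) = (a d + b c) X], while [a d] lies in the product of the contents. *)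
Lemma gaussian_dvd (R : comNzRingType) (a b c d : R) :
  gaussian_ring R -> a * c = 0 -> b * d = 0 -> exists r, a * d = r * (a * d + b * c).
Proof.
move=> gaussR ac0 bd0; set e := a * d + b * c.
pose g := a%:P + b%:P * 'X; pose h := c%:P + d%:P * 'X.
have coef_gh k : (g * h)`_k = (e%:P * 'X)`_k.
  have acP : a%:P * c%:P = 0 :> {poly R} by rewrite -polyCM ac0.
  have bdP : b%:P * d%:P = 0 :> {poly R} by rewrite -polyCM bd0.
  suff -> : g * h = e%:P * 'X by [].
  by rewrite /g /h /e polyCD !polyCM; ring: acP bdP.
have coef_g0 : g`_0 = a by rewrite coefD coefC coefCM coefX mulr0 addr0.
have coef_h1 : h`_1 = d by rewrite coefD coefC coefCM coefX mulr1 add0r.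
have [r ->] : content (g * h) (a * d).
  apply/gaussR; exists [:: (a, d)]; split; last by rewrite big_seq1.
  by move=> p; rewrite inE => /eqP -> /=; rewrite -coef_g0 -coef_h1; split; apply: content_coef.
exists (\sum_(i < size (g * h)) r i * 'X`_i).
rewrite mulr_suml; apply: eq_bigr => i _.
by rewrite coef_gh coefCM mulrCA mulrC.
Qed.

Lemma rmorph_surj_nonunit (A B : comNzRingType) (f : {rmorphism A -> B}) (a : A) :
  (forall b, exists a', f a' = b) -> (forall v, exists w, (1 - a * v) * w = 1) ->
  ~ exists u, f a * u = 1.
Proof.
move=> fsurj jac [u au]; have [v fv] := fsurj u; have [w avw] := jac v.
have /esym/eqP := congr1 f avw.
by rewrite rmorphM rmorphB rmorph1 rmorphM fv au subrr mul0r oner_eq0.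
Qed.

Section AmalgamationTheory.
Variables (A B : comNzRingType) (f : {rmorphism A -> B}) (J : ideal B).
Local Notation R := (amalg f J).

Let idealJ := ideal_predP J.

Lemma amalg_valP (x : R) : (val x).2 - f (val x).1 \in ideal_pred J.
Proof. exact: (valP x). Qed.

Lemma amalg_valM (x y : R) :
  val (x * y) = ((val x).1 * (val y).1, (val x).2 * (val y).2).
Proof. by []. Qed.

Lemma amalg_valD (x y : R) :
  val (x + y) = ((val x).1 + (val y).1, (val x).2 + (val y).2).
Proof. by []. Qed.

Lemma amalg_valN (x : R) : val (- x) = (- (val x).1, - (val x).2).
Proof. by []. Qed.

Lemma amalg_val1 : val (1 : R) = (1, 1).
Proof. by []. Qed.

Definition amalg_of (a : A) (b : B) (h : b - f a \in ideal_pred J) : R :=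
  @Amalg A B f J (a, b) h.

Fact amalg_incl_subproof a : f a - f a \in ideal_pred J.
Proof. by rewrite subrr; exact: (ideal0 idealJ). Qed.

Definition amalg_incl (a : A) : R := amalg_of (amalg_incl_subproof a).

Lemma amalg_inclM a a' : amalg_incl a * amalg_incl a' = amalg_incl (a * a').
Proof. by apply: val_inj; rewrite /= rmorphM. Qed.

Lemma amalg_incl0 : amalg_incl 0 = 0.
Proof. by apply: val_inj; rewrite /= rmorph0. Qed.

Lemma amalg_unit (x : R) a' b' :
  (val x).1 * a' = 1 -> (val x).2 * b' = 1 -> exists y, x * y = 1.
Proof.
move=> xa' xb'.
have fxa' : f (val x).1 * f a' = 1 by rewrite -rmorphM xa' rmorph1.
have Jy : b' - f a' \in ideal_pred J.
  have -> : b' - f a' = - (b' * f a') * ((val x).2 - f (val x).1) by ring: xb' fxa'.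
  by apply: (idealMl idealJ); exact: amalg_valP.
by exists (amalg_of Jy); apply: val_inj; rewrite amalg_valM amalg_val1 /= xa' xb'.
Qed.

Lemma amalg_regular_snd (x : R) t :
  regular x -> t \in ideal_pred J -> (val x).2 * t = 0 -> t = 0.
Proof.
move=> xreg Jt xt.
have Jt' : t - f 0 \in ideal_pred J by rewrite rmorph0 subr0.
have /xreg /(congr1 (fun y : R => (val y).2)) // : x * amalg_of Jt' = 0.
by apply: val_inj; rewrite amalg_valM /= mulr0 xt.
Qed.

Lemma amalg_gaussian_dvd (a b c d : A) :
  gaussian_ring R -> a * c = 0 -> b * d = 0 -> exists r, a * d = r * (a * d + b * c).
Proof.
move=> gaussR ac0 bd0.
have [r rE] : exists r, amalg_incl a * amalg_incl d =
    r * (amalg_incl a * amalg_incl d + amalg_incl b * amalg_incl c).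
  by apply: gaussian_dvd; rewrite // amalg_inclM (ac0, bd0) amalg_incl0.
exists (val r).1; have := congr1 (fun z : R => (val z).1) rE.
by rewrite !(amalg_valM, amalg_valD).
Qed.

End AmalgamationTheory.

Section LocalDuplication.
Variables (B : comNzRingType) (m : {pred B}) (J : ideal B).
Hypotheses (local_m : local_ring (fun x => x \in m)) (Jm : {subset ideal_pred J <= m}).
Local Notation A := (dup J).

Definition dup_of (a b : B) (h : b - a \in ideal_pred J) : A := @amalg_of B B idfun J a b h.

Lemma dup_unit (x : A) : (val x).1 \notin m -> exists y, x * y = 1.
Proof.
move=> x1m; have x2m : (val x).2 \notin m.
  by apply: (ideal_notinB (local_ideal local_m) x1m); apply/Jm/amalg_valP.
have [[a' xa'] [b' xb']] := (local_unit local_m x1m, local_unit local_m x2m).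
exact: amalg_unit xa' xb'.
Qed.

Lemma dup_jacobson (x : A) : (val x).1 \in m -> forall v, exists w, (1 - x * v) * w = 1.
Proof.
move=> x1m v; apply: dup_unit; rewrite amalg_valD amalg_valN amalg_valM amalg_val1 /=.
apply: (ideal_notinB (local_ideal local_m) (local_one_notin local_m)).
rewrite addrAC subrr sub0r; apply: (idealN (local_ideal local_m)).
exact: (idealMr (local_ideal local_m)).
Qed.

Lemma surj_dup_fst_in (C : comNzRingType) (n : {pred C}) (f : {rmorphism A -> C}) (x : A) :
  local_ring (fun c => c \in n) -> (forall c, exists a, f a = c) ->
  (val x).1 \in m -> f x \in n.
Proof.
move=> local_n fsurj x1m; apply: (local_nonunit local_n).
exact: rmorph_surj_nonunit fsurj (dup_jacobson x1m).
Qed.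

Lemma amalg_dup_not_gaussian (C : comNzRingType) (f : {rmorphism A -> C}) (K : ideal C)
    (x y : B) :
  x \in ideal_pred J -> y \in ideal_pred J -> x * y != 0 -> ~ gaussian_ring (amalg f K).
Proof.
move=> Jx Jy /eqP; apply: contra_not => gaussR.
have Jx' : x - 0 \in ideal_pred J by rewrite subr0.
have Jy' : y - 0 \in ideal_pred J by rewrite subr0.
have Jx'' : 0 - x \in ideal_pred J by rewrite sub0r; exact: (idealN (ideal_predP J) Jx).
have Jy'' : 0 - y \in ideal_pred J by rewrite sub0r; exact: (idealN (ideal_predP J) Jy).
(* [a d = (0, x y)] is not a multiple of [a d + b c = (x y, x y)] in [B ⋈ J]. *)
pose a := dup_of Jx'; pose b := dup_of Jy''; pose c := dup_of Jx''; pose d := dup_of Jy'.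
have [r rE] : exists r, a * d = r * (a * d + b * c).
  by apply: (amalg_gaussian_dvd gaussR); apply: val_inj; rewrite amalg_valM /= ?mul0r ?mulr0.
have := congr1 val rE; rewrite !(amalg_valM, amalg_valD) /= !(mul0r, mulr0, addr0, add0r).
case=> r1xy r2xy; apply: (local_eq0_of_mul_congr local_m (Jm (amalg_valP r))).
  by rewrite [x * y]mulrC -r1xy.
by rewrite -r2xy.
Qed.

End LocalDuplication.

Lemma zero_divisor_annihilator (B : comNzRingType) (m : {pred B}) (u c : B) :
  (forall x, zero_divisor x <-> x \in m) -> u \in m -> u != 0 -> c \in m ->
  exists t, [/\ t \in m, t != 0 & c * t = 0].
Proof.
move=> Zm mu u0 /Zm [t [t0 ct]].
have [->|c0] := eqVneq c 0; first by exists u; rewrite mul0r.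
by exists t; split=> //; apply/Zm; exists c; rewrite mulrC.
Qed.

Section MainAmalgamation.
Variables (B : comNzRingType) (m : {pred B}) (idealm : is_ideal (fun x => x \in m)).
Hypotheses (local_m : local_ring (fun x => x \in m)) (Zm : forall x, zero_divisor x <-> x \in m).
Variables (f : {rmorphism dup (Ideal idealm) -> B}) (fsurj : forall b, exists a, f a = b).
Variables (u : B) (mu : u \in m) (u0 : u != 0).
Local Notation R := (amalg f (Ideal idealm)).

Lemma amalg_regular_unit (z : R) : regular z -> exists z', z * z' = 1.
Proof.
move=> zreg.
have z2m : (val z).2 \notin m.
  apply/negP => /(zero_divisor_annihilator Zm mu u0) [t [mt t0 zt]].
  by move/eqP: t0; apply; exact: amalg_regular_snd zreg mt zt.
have fz1m : f (val z).1 \notin m.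
  by apply: (ideal_notinB idealm z2m); apply: (idealBC idealm); exact: amalg_valP.
have z11m : (val (val z).1).1 \notin m.
  by apply: contraNN fz1m; exact: surj_dup_fst_in.
have [a' za'] := @dup_unit _ _ (Ideal idealm) local_m (fun _ => id) _ z11m.
have [b' zb'] := local_unit local_m z2m.
exact: amalg_unit za' zb'.
Qed.

End MainAmalgamation.

Theorem mainTheorem8 (B : comNzRingType) (m : {pred B})
    (hm : is_ideal (fun x => x \in m))
    (hloc : local_ring (fun x => x \in m))
    (hpruf : prufer_ring B)
    (hZ : forall x : B, zero_divisor x <-> x \in m)
    (hm2 : ~ (forall x : B, ideal_mul (fun y => y \in m) (fun y => y \in m) x -> x = 0))
    (f : {rmorphism dup (@Ideal B m hm) -> B})
    (hf : forall b : B, exists a : dup (@Ideal B m hm), f a = b) :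
  prufer_ring (amalg f (@Ideal B m hm)) /\ ~ gaussian_ring (amalg f (@Ideal B m hm)).
Proof.
have [x [y [mx my xy0]]] := ideal_mul_neq0 hm2.
have mxy : x * y \in m by exact: (idealMr hm).
have Im : {subset ideal_pred (Ideal hm) <= m} by [].
split; first exact/prufer_of_regular_unit/(amalg_regular_unit hloc hZ hf mxy xy0).
exact: (amalg_dup_not_gaussian hloc Im mx my xy0).
Qed.
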